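(* Let $A\in\mathbb Z^{d\times n}$ with $\ker(A)\cap\mathbb N^n=\{0\}$ and let $B\subseteq\ker(A)$. If $B$ is distance reducing, then for every $z\in D(A)$ we have $z\in B$ or $-z\in B$. If $B$ is strongly distance reducing, then for every $z\in D^w(A)$ we have $z\in B$ or $-z\in B$.
   Context: For $z\in\mathbb Z^n$, $z^\pm\in\mathbb N^n$ are the unique vectors with disjoint supports and $z=z^+-z^-$; $\|\cdot\|$ is the $1$-norm; $\le$ on $\mathbb N^n$ is coordinatewise. For $z\in\ker(A)$, a positive (resp. negative) distance decomposition is $z=u+v$ with $u,v\in\ker(A)\setminus\{0\}$, $u^+\le z^+$ (resp. $u^-\le z^-$) and $\|v\|<\|z\|$. $D^+(A)$ (resp. $D^-(A)$) is the set of nonzero $z\in\ker(A)$ with no positive (resp. negative) distance decomposition; $D(A)=D^+(A)\cap D^-(A)$, $D^w(A)=D^+(A)\cup D^-(A)$. For nonzero $z\in\ker(A)$: $u$ reduces $z$ from $z^+$ if some $\varepsilon\in\{\pm1\}$ has $z^++\varepsilon u\in\mathbb N^n$ and $\|z^++\varepsilon u-z^-\|<\|z\|$; from $z^-$ if some $\varepsilon$ has $z^-+\varepsilon u\in\mathbb N^n$ and $\|z^+-(z^-+\varepsilon u)\|<\|z\|$. $B$ is distance reducing if every nonzero $z\in\ker(A)$ is reduced from $z^+$ or $z^-$ by some element of $B$; strongly distance reducing if every such $z$ is reduced from $z^+$ by some element of $B$ and from $z^-$ by some (possibly different) element of $B$. *)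

From mathcomp Require Import all_boot all_order all_algebra.
Set Implicit Arguments. Unset Strict Implicit. Unset Printing Implicit Defensive.
Import Order.TTheory GRing.Theory Num.Theory.
Local Open Scope ring_scope.

Section Defs.
Variables (d n : nat) (A : 'M[int]_(d, n)).

Definition vpos (z : 'cV[int]_n) : 'cV[int]_n := \col_i Num.max (z i 0) 0.
Definition vneg (z : 'cV[int]_n) : 'cV[int]_n := \col_i Num.max (- z i 0) 0.

Definition norm1 (z : 'cV[int]_n) : int := \sum_i `|z i 0|.

Definition inN (z : 'cV[int]_n) : Prop := forall i, 0 <= z i 0.
Definition vle (x y : 'cV[int]_n) : Prop := forall i, x i 0 <= y i 0.

Definition inker (z : 'cV[int]_n) : Prop := A *m z = 0.

Definition pos_dist_decomp (z : 'cV[int]_n) : Prop :=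
  exists u v : 'cV[int]_n,
    [/\ inker u, inker v, u <> 0, v <> 0 &
     [/\ z = u + v, vle (vpos u) (vpos z) & norm1 v < norm1 z]].
Definition neg_dist_decomp (z : 'cV[int]_n) : Prop :=
  exists u v : 'cV[int]_n,
    [/\ inker u, inker v, u <> 0, v <> 0 &
     [/\ z = u + v, vle (vneg u) (vneg z) & norm1 v < norm1 z]].

Definition Dplus (z : 'cV[int]_n) : Prop :=
  [/\ z <> 0, inker z & ~ pos_dist_decomp z].
Definition Dminus (z : 'cV[int]_n) : Prop :=
  [/\ z <> 0, inker z & ~ neg_dist_decomp z].
Definition Dset (z : 'cV[int]_n) : Prop := Dplus z /\ Dminus z.
Definition Dweak (z : 'cV[int]_n) : Prop := Dplus z \/ Dminus z.

Definition reduces_plus (u z : 'cV[int]_n) : Prop :=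
  exists eps : int, (eps = 1 \/ eps = -1) /\
    inN (vpos z + eps *: u) /\ norm1 (vpos z + eps *: u - vneg z) < norm1 z.
Definition reduces_minus (u z : 'cV[int]_n) : Prop :=
  exists eps : int, (eps = 1 \/ eps = -1) /\
    inN (vneg z + eps *: u) /\ norm1 (vpos z - (vneg z + eps *: u)) < norm1 z.

Definition distance_reducing (B : 'cV[int]_n -> Prop) : Prop :=
  forall z, inker z -> z <> 0 ->
    exists2 u, B u & (reduces_plus u z \/ reduces_minus u z).
Definition strongly_distance_reducing (B : 'cV[int]_n -> Prop) : Prop :=
  forall z, inker z -> z <> 0 ->
    (exists2 u, B u & reduces_plus u z) /\ (exists2 u, B u & reduces_minus u z).
End Defs.

From mathcomp Require Import all_boot all_order all_algebra zify.
Set Implicit Arguments. Unset Strict Implicit. Unset Printing Implicit Defensive.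
Import Order.TTheory GRing.Theory Num.Theory.
Local Open Scope ring_scope.

(* If u reduces z from z^+, then w := -eps u satisfies w <= z^+, hence w^+ <= z^+, and
   ||z - w|| < ||z||, so z = w + (z - w) is a positive distance decomposition
   unless z - w = 0, i.e. z = w = -eps u.  The case of z^- is symmetric with
   w := eps u. *)

Section SignedParts.
Variable n : nat.
Implicit Types p w z : 'cV[int]_n.

Lemma max0_sub_max0N (a : int) : Num.max a 0 - Num.max (- a) 0 = a.
Proof. by rewrite !maxEle; case: ifP; case: ifP; lia. Qed.

Lemma vpos_sub_vneg z : vpos z - vneg z = z.
Proof. by apply/matrixP => i j; rewrite ord1 !mxE max0_sub_max0N. Qed.

Lemma vpos_opp z : vpos (- z) = vneg z.
Proof. by apply/matrixP => i j; rewrite !mxE. Qed.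

Lemma inN_vpos z : inN (vpos z).
Proof. by move=> i; rewrite mxE le_max lexx orbT. Qed.

Lemma inN_vneg z : inN (vneg z).
Proof. by rewrite -vpos_opp; apply: inN_vpos. Qed.

Lemma vle_vpos p w : inN p -> inN (p - w) -> vle (vpos w) p.
Proof.
move=> p_ge0 pw_ge0 i; move: (pw_ge0 i); rewrite !mxE ge_max subr_ge0 => ->.
exact: p_ge0.
Qed.

End SignedParts.

Section DistanceReduction.
Variables (d n : nat) (A : 'M[int]_(d, n)).
Implicit Types u w z : 'cV[int]_n.

Lemma inkerB u w : inker A u -> inker A w -> inker A (u - w).
Proof. by rewrite /inker mulmxBr => -> ->; rewrite subrr. Qed.

Lemma inkerN u : inker A u -> inker A (- u).
Proof. by rewrite /inker mulmxN => ->; rewrite oppr0. Qed.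

Lemma sign_scale_cases (eps : int) u :
  eps = 1 \/ eps = -1 -> eps *: u = u \/ eps *: u = - u.
Proof. by case=> ->; rewrite ?scale1r ?scaleN1r; [left | right]. Qed.

Lemma dist_decomp_witness z w :
  inker A z -> inker A w -> norm1 (z - w) < norm1 z -> z != w ->
  [/\ inker A (z - w), w <> 0, z - w <> 0 & z = w + (z - w)].
Proof.
move=> Az Aw lt_zw /eqP neq_zw; split.
- exact: inkerB.
- by move=> w0; move: lt_zw; rewrite w0 subr0 ltxx.
- by move/eqP; rewrite subr_eq0 => /eqP.
- by rewrite addrC subrK.
Qed.

Lemma eq_or_pos_dist_decomp z w :
  inker A z -> inker A w -> inN (vpos z - w) -> norm1 (z - w) < norm1 z ->
  z = w \/ pos_dist_decomp A z.
Proof.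
move=> Az Aw zw_ge0 lt_zw; have [-> | neq_zw] := eqVneq z w; first by left.
have [Azw w0 zw0 z_eq] := dist_decomp_witness Az Aw lt_zw neq_zw.
right; exists w, (z - w); split=> //; split=> //.
exact: vle_vpos (inN_vpos z) zw_ge0.
Qed.

Lemma eq_or_neg_dist_decomp z w :
  inker A z -> inker A w -> inN (vneg z + w) -> norm1 (z - w) < norm1 z ->
  z = w \/ neg_dist_decomp A z.
Proof.
move=> Az Aw zw_ge0 lt_zw; have [-> | neq_zw] := eqVneq z w; first by left.
have [Azw w0 zw0 z_eq] := dist_decomp_witness Az Aw lt_zw neq_zw.
right; exists w, (z - w); split=> //; split=> //.
rewrite -vpos_opp; apply: vle_vpos (inN_vneg z) _.
by rewrite opprK.
Qed.

Lemma reduces_plus_eq z u :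
  inker A z -> inker A u -> ~ pos_dist_decomp A z -> reduces_plus u z ->
  z = u \/ z = - u.
Proof.
move=> Az Au no_decomp [eps [eps_sign [zu_ge0 lt_zu]]].
have w_cases : - (eps *: u) = u \/ - (eps *: u) = - u.
  by case: (sign_scale_cases u eps_sign) => ->; rewrite ?opprK; [right | left].
have Aw : inker A (- (eps *: u)) by case: w_cases => ->; last apply: inkerN.
rewrite -[_ *: u]opprK in zu_ge0 lt_zu; rewrite addrAC vpos_sub_vneg in lt_zu.
have [->|//] := eq_or_pos_dist_decomp Az Aw zu_ge0 lt_zu.
by case: w_cases => ->; [left | right].
Qed.

Lemma reduces_minus_eq z u :
  inker A z -> inker A u -> ~ neg_dist_decomp A z -> reduces_minus u z ->
  z = u \/ z = - u.
Proof.
move=> Az Au no_decomp [eps [eps_sign [zu_ge0 lt_zu]]].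
have w_cases := sign_scale_cases u eps_sign.
have Aw : inker A (eps *: u) by case: w_cases => ->; last apply: inkerN.
rewrite opprD addrA vpos_sub_vneg in lt_zu.
have [->|//] := eq_or_neg_dist_decomp Az Aw zu_ge0 lt_zu.
by case: w_cases => ->; [left | right].
Qed.

End DistanceReduction.

Lemma mem_or_opp_mem n (B : 'cV[int]_n -> Prop) z u :
  B u -> z = u \/ z = - u -> B z \/ B (- z).
Proof. by move=> Bu [-> | ->]; [left | right; rewrite opprK]. Qed.

Theorem proposition8p4 (d n : nat) (A : 'M[int]_(d, n)) (B : 'cV[int]_n -> Prop) :
  (forall z : 'cV[int]_n, inker A z -> inN z -> z = 0) ->
  (forall u, B u -> inker A u) ->
  (distance_reducing A B -> forall z, Dset A z -> B z \/ B (- z)) /\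
  (strongly_distance_reducing A B -> forall z, Dweak A z -> B z \/ B (- z)).
Proof.
move=> _ AB; split.
- move=> reducing z [[z0 Az no_pos] [_ _ no_neg]].
  have [u Bu [red | red]] := reducing z Az z0; apply: (mem_or_opp_mem Bu).
  + exact: reduces_plus_eq Az (AB u Bu) no_pos red.
  + exact: reduces_minus_eq Az (AB u Bu) no_neg red.
- move=> reducing z [[z0 Az no_pos] | [z0 Az no_neg]].
  + have [[u Bu red] _] := reducing z Az z0; apply: (mem_or_opp_mem Bu).
    exact: reduces_plus_eq Az (AB u Bu) no_pos red.
  + have [_ [u Bu red]] := reducing z Az z0; apply: (mem_or_opp_mem Bu).
    exact: reduces_minus_eq Az (AB u Bu) no_neg red.
Qed.
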